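(* Let $G=(V,E)$ be a finite simple graph which is $S_{1,1,5}$-free, $K_4$-free, diamond-free and butterfly-free. Let $xy\in E$ and let $r$ be a vertex with $rx\in E$ and $ry\notin E$. For $i\ge 1$ let $N_i=\{z\in V:\operatorname{dist}_G(z,\{x,y\})=i\}$. Assume $N_2$ is an independent set and every vertex of $N_3$ has exactly one neighbor in $N_2$. If $|N_2|\ge 5$, then $N_6=\emptyset$.
   Context: $S_{1,1,5}$ is the tree with a center $u$ adjacent to $a$, $b$ and $z_1$, where $u,z_1,\dots,z_5$ is an induced path, and no other edges. A diamond is $K_4$ minus one edge; a butterfly consists of two disjoint edges (inducing $2K_2$) together with a vertex adjacent to all four of their endpoints. $\operatorname{dist}_G(z,\{x,y\})$ is the minimum of the distances from $z$ to $x$ and to $y$. *)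

From mathcomp Require Import all_boot.
Set Implicit Arguments. Unset Strict Implicit. Unset Printing Implicit Defensive.

Section Graphs.
Variable T : finType.

Definition simple_graph (e : rel T) := symmetric e /\ irreflexive e.

Definition induced_sub (e : rel T) (n : nat) (h : rel 'I_n) : Prop :=
  exists f : 'I_n -> T, injective f /\ forall i j, e (f i) (f j) = h i j.

Definition H_free (e : rel T) (n : nat) (h : rel 'I_n) : Prop :=
  ~ induced_sub e h.

Fixpoint walkb (e : rel T) (k : nat) (s z : T) : bool :=
  match k with
  | 0 => s == z
  | k'.+1 => [exists w, e s w && walkb e k' w z]
  end.

Definition dist_set_eq (e : rel T) (S : {set T}) (z : T) (i : nat) : bool :=
  [exists s in S, walkb e i s z] &&
  [forall j : 'I_i, forall s in S, ~~ walkb e j s z].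

Definition Nlayer (e : rel T) (x y : T) (i : nat) : {set T} :=
  [set z | dist_set_eq e [set x; y] z i].

End Graphs.

Definition pat {n : nat} (l : seq (nat * nat)) : rel 'I_n :=
  fun i j => ((val i, val j) \in l) || ((val j, val i) \in l).

(* S_{1,1,5}: 0 = u, 1 = a, 2 = b, 3..7 = z1..z5 *)
Definition S115 : rel 'I_8 :=
  @pat 8 [:: (0,1); (0,2); (0,3); (3,4); (4,5); (5,6); (6,7)].
Definition K4 : rel 'I_4 :=
  @pat 4 [:: (0,1); (0,2); (0,3); (1,2); (1,3); (2,3)].
Definition diamond : rel 'I_4 :=
  @pat 4 [:: (0,1); (0,2); (0,3); (1,2); (1,3)].
Definition butterfly : rel 'I_5 :=
  @pat 5 [:: (0,1); (0,2); (0,3); (0,4); (1,2); (3,4)].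

(* A vertex z6 of N_6 gives a path z2 z3 z4 z5 z6 with z_i in N_i and a vertex u of N_1
   adjacent to z2; up to swapping x and y, u is adjacent to x.  Let A = N_2 \ {z2}.  As z3
   sees no vertex of N_2 but z2, an S_{1,1,5} with its long leg running down the path shows
   that no parent (N_1-neighbour) of a vertex of A sees z2, that u sees no vertex of A, and
   that every vertex of N_1 is the parent of at most one vertex of A.  Split A by whether
   some parent sees x: at most one vertex of A has such a parent, and at most two do not,
   since otherwise their parents together with x, y and u induce S_{1,1,5}, K_4, a diamond
   or a butterfly (arguing separately whether x y u is a triangle or y x u an induced
   path).  Hence |N_2| <= 4. *)

From mathcomp Require Import all_boot.
Set Implicit Arguments. Unset Strict Implicit. Unset Printing Implicit Defensive.

Section InducedSubgraphs.
Variables (T : finType) (e : rel T).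
Hypotheses (e_sym : symmetric e) (e_irr : irreflexive e).

Lemma adj_neq a b : e a b -> a != b.
Proof. by apply: contraTneq => ->; rewrite e_irr. Qed.

Lemma adj_nonadj_neq a b c : e a c -> ~~ e b c -> a != b.
Proof. by move=> eac; apply: contraNneq => <-. Qed.

Lemma induced_sub_of_seq n (h : rel 'I_n) (d : T) (s : seq T) :
  size s = n -> uniq s ->
  (forall i j : 'I_n, e (nth d s i) (nth d s j) = h i j) -> induced_sub e h.
Proof.
move=> size_s uniq_s eh; exists (fun i => nth d s i); split=> // i j /eqP.
by rewrite nth_uniq ?size_s // => /eqP/val_inj.
Qed.

Ltac add_sym_hyps :=
  repeat match goal with
  | H : is_true (e ?a ?b) |- _ =>
      lazymatch goal with
      | _ : is_true (e b a) |- _ => fail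
      | _ => have := H; rewrite e_sym => ?
      end
  | H : is_true (~~ e ?a ?b) |- _ =>
      lazymatch goal with
      | _ : is_true (~~ e b a) |- _ => fail
      | _ => have := H; rewrite e_sym => ?
      end
  end.

Ltac prove_neq :=
  match goal with
  | |- is_true (?a != ?b) =>
    first [ assumption | by rewrite eq_sym | by apply: adj_neq
          | match goal with H : is_true (e a ?c) |- _ =>
              apply: (adj_nonadj_neq H); assumption end
          | match goal with H : is_true (e b ?c) |- _ =>
              rewrite eq_sym; apply: (adj_nonadj_neq H); assumption end ]
  end.

(* [by []] discharges the out-of-range cases [m.+n < n]. *)
Ltac nat_cases m := first [ by [] | case: m => [|m]; [ idtac | nat_cases m ] ].

Ltac prove_induced n d l :=
  add_sym_hyps;
  apply: (@induced_sub_of_seq n _ d l) => //;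
  [ rewrite /= !inE !negb_or; repeat (apply/andP; split); (done || prove_neq)
  | do 2 (let m := fresh "m" in case=> m; nat_cases m => ?);
    rewrite /pat /=; first [by rewrite e_irr | by apply/idP | by apply/negbTE] ].

Lemma induced_S115 a0 a1 a2 a3 a4 a5 a6 a7 :
  e a0 a1 -> e a0 a2 -> e a0 a3 -> e a3 a4 -> e a4 a5 -> e a5 a6 -> e a6 a7 ->
  ~~ e a0 a4 -> ~~ e a0 a5 -> ~~ e a0 a6 -> ~~ e a0 a7 ->
  ~~ e a1 a2 -> ~~ e a1 a3 -> ~~ e a1 a4 -> ~~ e a1 a5 -> ~~ e a1 a6 -> ~~ e a1 a7 ->
  ~~ e a2 a3 -> ~~ e a2 a4 -> ~~ e a2 a5 -> ~~ e a2 a6 -> ~~ e a2 a7 ->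
  ~~ e a3 a5 -> ~~ e a3 a6 -> ~~ e a3 a7 ->
  ~~ e a4 a6 -> ~~ e a4 a7 -> ~~ e a5 a7 -> a1 != a2 ->
  induced_sub e S115.
Proof. by intros; prove_induced 8 a0 [:: a0; a1; a2; a3; a4; a5; a6; a7]. Qed.

Lemma induced_K4 a0 a1 a2 a3 :
  e a0 a1 -> e a0 a2 -> e a0 a3 -> e a1 a2 -> e a1 a3 -> e a2 a3 ->
  induced_sub e K4.
Proof. by intros; prove_induced 4 a0 [:: a0; a1; a2; a3]. Qed.

Lemma induced_diamond a0 a1 a2 a3 :
  e a0 a1 -> e a0 a2 -> e a0 a3 -> e a1 a2 -> e a1 a3 -> ~~ e a2 a3 -> a2 != a3 ->
  induced_sub e diamond.
Proof. by intros; prove_induced 4 a0 [:: a0; a1; a2; a3]. Qed.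

Lemma induced_butterfly a0 a1 a2 a3 a4 :
  e a0 a1 -> e a0 a2 -> e a0 a3 -> e a0 a4 -> e a1 a2 -> e a3 a4 ->
  ~~ e a1 a3 -> ~~ e a1 a4 -> ~~ e a2 a3 -> ~~ e a2 a4 ->
  induced_sub e butterfly.
Proof. by intros; prove_induced 5 a0 [:: a0; a1; a2; a3; a4]. Qed.

Lemma cherry_two_apexes x y u p p' :
  H_free e K4 -> H_free e diamond -> H_free e butterfly ->
  e x y -> e x u -> ~~ e y u -> p != p' -> e x p -> e x p' ->
  e p y != e p u -> e p' y != e p' u -> False.
Proof.
move=> K4_free diamond_free butterfly_free.
wlog py : y u / e p y.
  move=> W exy exu yu pp' xp xp' ne_p ne_p'.
  case: (boolP (e p y)) => py; first exact: (W y u).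
  have pu : e p u by move: ne_p; rewrite (negbTE py); case: (e p u).
  by apply: (W u y) => //; [rewrite e_sym | rewrite eq_sym..].
move=> exy exu yu pp' xp xp' ne_p ne_p'.
have pu : ~~ e p u by move: ne_p; rewrite py; case: (e p u).
case: (boolP (e p' y)) => p'y.
  have p'u : ~~ e p' u by move: ne_p'; rewrite p'y; case: (e p' u).
  add_sym_hyps; case: (boolP (e p p')) => pp'adj.
    by apply: K4_free; apply: (@induced_K4 x y p p').
  by apply: diamond_free; apply: (@induced_diamond x y p p').
have p'u : e p' u by move: ne_p'; rewrite (negbTE p'y); case: (e p' u).
add_sym_hyps; case: (boolP (e p p')) => pp'adj.
  by apply: diamond_free; apply: (@induced_diamond x p p' y) => //; prove_neq.
by apply: butterfly_free; apply: (@induced_butterfly x y p u p').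
Qed.

End InducedSubgraphs.

Section Layers.
Variables (T : finType) (e : rel T).
Hypothesis e_sym : symmetric e.

Lemma walkb_snoc k s w z : walkb e k s w -> e w z -> walkb e k.+1 s z.
Proof.
elim: k s => [|k IHk] s /=.
  by move=> /eqP -> ewz; apply/existsP; exists z; rewrite ewz eqxx.
move=> /existsP [w' /andP [esw' w'w]] ewz; apply/existsP; exists w'.
by rewrite esw'; exact: IHk w'w ewz.
Qed.

Lemma walkb_unsnoc k s z : walkb e k.+1 s z -> exists2 w, walkb e k s w & e w z.
Proof.
elim: k s => [|k IHk] s /=.
  by move=> /existsP [w /andP [esw /eqP <-]]; exists s.
move=> /existsP [w /andP [esw wz]]; have [w' ww' ew'z] := IHk _ wz.
by exists w' => //; apply/existsP; exists w; rewrite esw.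
Qed.

Variables x y : T.
Local Notation N i := (Nlayer e x y i).

Lemma in_Nlayer i z : (z \in N i) =
  [exists s in [set x; y], walkb e i s z] &&
  [forall j : 'I_i, forall s in [set x; y], ~~ walkb e j s z].
Proof. by rewrite inE. Qed.

Lemma Nlayer_uniq i j z : z \in N i -> z \in N j -> i = j.
Proof.
wlog lt_ij : i j / i < j.
  by move=> W Hi Hj; case: (ltngtP i j) => // lt; [exact: W Hi Hj | exact: esym (W _ _ lt Hj Hi)].
rewrite !in_Nlayer => /andP [/existsP [s /andP [Hs walk_s]] _].
by move=> /andP [_ /forallP /(_ (Ordinal lt_ij)) /forallP /(_ s)]; rewrite Hs walk_s.
Qed.

Lemma Nlayer_neq i j a b : a \in N i -> b \in N j -> i != j -> a != b.
Proof. by move=> Ha Hb; apply: contraNneq => eq_ab; rewrite eq_ab in Ha; rewrite (Nlayer_uniq Ha Hb). Qed.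

Lemma Nlayer_edge i j a b : a \in N i -> b \in N j -> e a b -> j <= i.+1.
Proof.
move=> Ha Hb eab; rewrite leqNgt; apply/negP => lt_ij.
move: Ha Hb; rewrite !in_Nlayer => /andP [/existsP [s /andP [Hs walk_s]] _].
move=> /andP [_ /forallP /(_ (Ordinal lt_ij)) /forallP /(_ s)].
by rewrite Hs (walkb_snoc walk_s eab).
Qed.

Lemma Nlayer_nonadj i j a b :
  a \in N i -> b \in N j -> (i.+1 < j) || (j.+1 < i) -> ~~ e a b.
Proof.
move=> Ha Hb /orP [] lt; apply/negP => eab.
  by have := Nlayer_edge Ha Hb eab; rewrite leqNgt lt.
by rewrite e_sym in eab; have := Nlayer_edge Hb Ha eab; rewrite leqNgt lt.
Qed.

Lemma Nlayer_parent i z : z \in N i.+1 -> exists2 w, w \in N i & e w z.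
Proof.
rewrite in_Nlayer => /andP [/existsP [s /andP [Hs walk_s]] no_shorter].
have [w walk_w ewz] := walkb_unsnoc walk_s; exists w => //.
rewrite in_Nlayer; apply/andP; split; first by apply/existsP; exists s; rewrite Hs.
apply/forallP => j; apply/forallP => s'; apply/implyP => Hs'; apply/negP => walk_j.
have lt_j : j.+1 < i.+1 by rewrite ltnS.
move/forallP: no_shorter => /(_ (Ordinal lt_j)) /forallP /(_ s').
by rewrite Hs' (walkb_snoc walk_j ewz).
Qed.

Lemma Nlayer0P z : reflect (z = x \/ z = y) (z \in N 0).
Proof.
rewrite in_Nlayer; apply: (iffP andP) => [[/existsP [s /andP [Hs /eqP <-]] _]|z_xy].
  by move: Hs; rewrite !inE => /orP [] /eqP ->; [left | right].
split; last by apply/forallP => -[].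
by apply/existsP; exists z; rewrite /= eqxx andbT !inE; case: z_xy => ->; rewrite eqxx ?orbT.
Qed.

Lemma Nlayer1_adj p : p \in N 1 -> e p x || e p y.
Proof.
move=> /Nlayer_parent [a /Nlayer0P a_xy eap].
by rewrite e_sym in eap; case: a_xy eap => -> ->; rewrite ?orbT.
Qed.

Lemma Nlayer1_adj_y p : p \in N 1 -> ~~ e p x -> e p y.
Proof. by move=> /Nlayer1_adj; case: (e p x). Qed.

End Layers.

Lemma Nlayer_sym (T : finType) (e : rel T) x y i : Nlayer e y x i = Nlayer e x y i.
Proof. by apply/setP => z; rewrite !inE /dist_set_eq setUC. Qed.

Section SixthLayer.
Variables (T : finType) (e : rel T).
Hypotheses (e_sym : symmetric e) (e_irr : irreflexive e).
Hypotheses (S115_free : H_free e S115) (K4_free : H_free e K4)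
  (diamond_free : H_free e diamond) (butterfly_free : H_free e butterfly).
Variables x y u z2 z3 z4 z5 z6 : T.
Local Notation N i := (Nlayer e x y i).
Local Notation A := (N 2 :\ z2).
Hypotheses (exy : e x y)
  (N2_indep : forall a b, a \in N 2 -> b \in N 2 -> ~~ e a b)
  (z3_unique : forall v, v \in N 2 -> e z3 v -> v = z2).
Hypotheses (Hu : u \in N 1) (H2 : z2 \in N 2) (H3 : z3 \in N 3) (H4 : z4 \in N 4)
  (H5 : z5 \in N 5) (H6 : z6 \in N 6).
Hypotheses (eux : e u x) (euz2 : e u z2)
  (ez23 : e z2 z3) (ez34 : e z3 z4) (ez45 : e z4 z5) (ez56 : e z5 z6).

(* Only consumed by [side_condition], through [Nlayer_nonadj] and [Nlayer_neq]. *)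
Let Hx : x \in N 0 := introT (Nlayer0P e x y x) (or_introl erefl).
Let Hy : y \in N 0 := introT (Nlayer0P e x y y) (or_intror erefl).

Lemma z3_nonadj v : v \in N 2 -> v != z2 -> ~~ e z3 v.
Proof. by move=> Hv; apply: contra_neqN => /(z3_unique Hv). Qed.

Ltac prove_neq :=
  match goal with
  | |- is_true (?a != ?b) =>
    first [ assumption | by rewrite eq_sym
          | eapply Nlayer_neq; [eassumption | eassumption | reflexivity]
          | by apply: adj_neq
          | by rewrite eq_sym; apply: adj_neq
          | match goal with H : is_true (e a ?c) |- _ =>
              apply: (adj_nonadj_neq H); first [done | by rewrite e_sym] end
          | match goal with H : is_true (e b ?c) |- _ =>
              rewrite eq_sym; apply: (adj_nonadj_neq H); first [done | by rewrite e_sym] end ]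
  end.

Ltac side_condition :=
  first [ assumption | by rewrite e_sym | prove_neq
        | eapply Nlayer_nonadj; [exact: e_sym | eassumption | eassumption | reflexivity]
        | by apply: N2_indep | by rewrite e_sym; apply: N2_indep
        | by apply: z3_nonadj; [assumption | prove_neq]
        | by rewrite e_sym; apply: z3_nonadj; [assumption | prove_neq] ].

Ltac s115 a0 a1 a2 a3 a4 a5 a6 a7 :=
  apply: S115_free; apply: (@induced_S115 _ e e_sym e_irr a0 a1 a2 a3 a4 a5 a6 a7);
  side_condition.
Ltac k4 a0 a1 a2 a3 :=
  apply: K4_free; apply: (@induced_K4 _ e e_sym e_irr a0 a1 a2 a3); side_condition.
Ltac dia a0 a1 a2 a3 :=
  apply: diamond_free; apply: (@induced_diamond _ e e_sym e_irr a0 a1 a2 a3);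
  side_condition.
Ltac bfly a0 a1 a2 a3 a4 :=
  apply: butterfly_free; apply: (@induced_butterfly _ e e_sym e_irr a0 a1 a2 a3 a4);
  side_condition.

Lemma N1_nonadj_z2 p v : p \in N 1 -> v \in A -> e p v -> ~~ e p z2.
Proof.
move=> Hp /setD1P [vz2 Hv] epv; apply/negP => epz2.
have [a Ha eap] := Nlayer_parent Hp.
by s115 p a v z2 z3 z4 z5 z6.
Qed.

Lemma u_nonadj v : v \in A -> ~~ e u v.
Proof. by move=> Av; apply: contraL euz2 => /(N1_nonadj_z2 Hu Av). Qed.

Lemma N1_unique_child p v v' :
  p \in N 1 -> v \in A -> v' \in A -> e p v -> e p v' -> v = v'.
Proof.
move=> Hp Av Av' epv epv'; case: (eqVneq v v') => // vv'; exfalso.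
have pz2 := N1_nonadj_z2 Hp Av epv.
have uv := u_nonadj Av; have uv' := u_nonadj Av'.
move: Av Av' => /setD1P [vz2 Hv] /setD1P [v'z2 Hv'].
case: (boolP (e p u)) => pu; first by s115 p v v' u z2 z3 z4 z5.
case: (boolP (e p x)) => px; first by s115 p v v' x u z2 z3 z4.
have py := Nlayer1_adj_y e_sym Hp px.
by case: (boolP (e u y)) => uy; [s115 p v v' y u z2 z3 z4 | s115 p v v' y x u z2 z3].
Qed.

Lemma parents_neq p p' v v' : p \in N 1 -> v \in A -> v' \in A ->
  v != v' -> e p v -> e p' v' -> p != p'.
Proof.
move=> Hp Av Av' vv' epv ep'v'; apply: contraNneq vv' => eq_pp'.
by rewrite -eq_pp' in ep'v'; rewrite (N1_unique_child Hp Av Av' epv ep'v').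
Qed.

Section Triangle.
Hypothesis euy : e u y.

Lemma triangle_N1_nonadj_u p : p \in N 1 -> ~~ e p u.
Proof.
move=> Hp; apply/negP => epu; have := Nlayer1_adj e_sym Hp.
case: (boolP (e p x)) => px; case: (boolP (e p y)) => py //= _.
- by k4 x y u p.
- by dia x u p y.
- by dia y u p x.
Qed.

Lemma triangle_parent_not_both p v :
  p \in N 1 -> v \in A -> e p v -> e p x -> ~~ e p y.
Proof.
move=> Hp Av epv px; apply/negP => py.
have pz2 := N1_nonadj_z2 Hp Av epv; have pu := triangle_N1_nonadj_u Hp.
by dia x y u p.
Qed.

Lemma triangle_parents p p' v v' : p \in N 1 -> p' \in N 1 -> v \in A -> v' \in A ->
  v != v' -> e p v -> e p' v' -> e p x = e p' x -> False.
Proof.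
move=> Hp Hp' Av Av' vv' epv ep'v' same_x.
have pp' := parents_neq Hp Av Av' vv' epv ep'v'.
have pz2 := N1_nonadj_z2 Hp Av epv; have p'z2 := N1_nonadj_z2 Hp' Av' ep'v'.
have pu := triangle_N1_nonadj_u Hp; have p'u := triangle_N1_nonadj_u Hp'.
case: (boolP (e p x)) => px.
  have p'x : e p' x by rewrite -same_x.
  have py := triangle_parent_not_both Hp Av epv px.
  have p'y := triangle_parent_not_both Hp' Av' ep'v' p'x.
  by case: (boolP (e p p')) => adj_pp'; [bfly x y u p p' | s115 x p p' u z2 z3 z4 z5].
have p'x : ~~ e p' x by rewrite -same_x.
have py := Nlayer1_adj_y e_sym Hp px.
have p'y := Nlayer1_adj_y e_sym Hp' p'x.
by case: (boolP (e p p')) => adj_pp'; [bfly y x u p p' | s115 y p p' u z2 z3 z4 z5].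
Qed.

End Triangle.

Section Cherry.
Hypothesis nuy : ~~ e u y.

Lemma cherry_x_parent p v : p \in N 1 -> v \in A -> e p v -> e p x -> e p y != e p u.
Proof.
move=> Hp Av epv px; have pz2 := N1_nonadj_z2 Hp Av epv.
case: (boolP (e p y)) => py.
  by case: (boolP (e p u)) => // pu; exfalso; dia x p u y.
by case: (boolP (e p u)) => // pu; exfalso; s115 x y p u z2 z3 z4 z5.
Qed.

Lemma cherry_y_parent_nonadj_u p v : p \in N 1 -> v \in A -> e p v -> ~~ e p x -> ~~ e p u.
Proof.
move=> Hp Av epv px; have pz2 := N1_nonadj_z2 Hp Av epv.
apply/negP => pu.
by s115 u x p z2 z3 z4 z5 z6.
Qed.

Lemma cherry_x_parents p p' v v' : p \in N 1 -> p' \in N 1 -> v \in A -> v' \in A ->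
  v != v' -> e p v -> e p' v' -> e p x -> e p' x -> False.
Proof.
move=> Hp Hp' Av Av' vv' epv ep'v' px p'x.
have xu : e x u by rewrite e_sym.
have yu : ~~ e y u by rewrite e_sym.
have xp : e x p by rewrite e_sym.
have xp' : e x p' by rewrite e_sym.
apply: (cherry_two_apexes e_sym e_irr K4_free diamond_free butterfly_free exy xu yu
  (parents_neq Hp Av Av' vv' epv ep'v') xp xp').
- exact: cherry_x_parent Hp Av epv px.
- exact: cherry_x_parent Hp' Av' ep'v' p'x.
Qed.

Lemma cherry_y_parents_adj p p' v v' : p \in N 1 -> p' \in N 1 -> v \in A -> v' \in A ->
  v != v' -> e p v -> e p' v' -> ~~ e p x -> ~~ e p' x -> e p p'.
Proof.
move=> Hp Hp' Av Av' vv' epv ep'v' px p'x; apply: contraT => not_pp'.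
have pp' := parents_neq Hp Av Av' vv' epv ep'v'.
have pz2 := N1_nonadj_z2 Hp Av epv; have p'z2 := N1_nonadj_z2 Hp' Av' ep'v'.
have pu := cherry_y_parent_nonadj_u Hp Av epv px.
have p'u := cherry_y_parent_nonadj_u Hp' Av' ep'v' p'x.
have py := Nlayer1_adj_y e_sym Hp px.
have p'y := Nlayer1_adj_y e_sym Hp' p'x.
by exfalso; s115 y p p' x u z2 z3 z4.
Qed.

End Cherry.

Let has_x_parent := [set v | [exists p in N 1, e p v && e p x]].

Lemma card_x_parent_children : #|A :&: has_x_parent| <= 1.
Proof.
rewrite leqNgt; apply/card_gt1P => -[v [v' [/setIP [Av Xv] /setIP [Av' Xv'] vv']]].
move: Xv Xv'; rewrite !inE => /existsP [p /and3P [Hp epv px]].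
move=> /existsP [p' /and3P [Hp' ep'v' p'x]].
case: (boolP (e u y)) => uy.
  by apply: (triangle_parents uy Hp Hp' Av Av' vv' epv ep'v'); rewrite px p'x.
exact: (cherry_x_parents uy Hp Hp' Av Av' vv' epv ep'v' px p'x).
Qed.

Lemma y_parent v : v \in A :\: has_x_parent ->
  exists2 p, p \in N 1 & e p v && ~~ e p x.
Proof.
move=> /setDP [/setD1P [_ Hv] Xv]; have [p Hp epv] := Nlayer_parent Hv.
exists p; rewrite // epv; apply: contra Xv => px.
by rewrite inE; apply/existsP; exists p; rewrite Hp epv px.
Qed.

Lemma card_y_parent_children : #|A :\: has_x_parent| <= 2.
Proof.
rewrite leqNgt; apply/card_gt2P => -[v1 [v2 [v3 [[Y1 Y2 Y3] [v12 v23 v31]]]]].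
have [p1 Hp1 /andP [e1 p1x]] := y_parent Y1.
have [p2 Hp2 /andP [e2 p2x]] := y_parent Y2.
have [p3 Hp3 /andP [e3 p3x]] := y_parent Y3.
move: Y1 Y2 Y3 => /setDP [Av1 _] /setDP [Av2 _] /setDP [Av3 _].
case: (boolP (e u y)) => uy.
  apply: (triangle_parents uy Hp1 Hp2 Av1 Av2 v12 e1 e2).
  by rewrite (negbTE p1x) (negbTE p2x).
have y1 := Nlayer1_adj_y e_sym Hp1 p1x.
have y2 := Nlayer1_adj_y e_sym Hp2 p2x.
have y3 := Nlayer1_adj_y e_sym Hp3 p3x.
have p12 := cherry_y_parents_adj uy Hp1 Hp2 Av1 Av2 v12 e1 e2 p1x p2x.
have p23 := cherry_y_parents_adj uy Hp2 Hp3 Av2 Av3 v23 e2 e3 p2x p3x.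
have p31 := cherry_y_parents_adj uy Hp3 Hp1 Av3 Av1 v31 e3 e1 p3x p1x.
by k4 y p1 p2 p3.
Qed.

Lemma card_N2_le4 : #|N 2| <= 4.
Proof.
rewrite (cardsD1 z2) H2 -(cardsID has_x_parent) add1n ltnS.
exact: leq_add card_x_parent_children card_y_parent_children.
Qed.

End SixthLayer.

Theorem lemma23 (T : finType) (e : rel T) (x y r : T) :
  simple_graph e ->
  H_free e S115 -> H_free e K4 -> H_free e diamond -> H_free e butterfly ->
  e x y -> e r x -> ~~ e r y -> r != y ->
  (forall u v, u \in Nlayer e x y 2 -> v \in Nlayer e x y 2 -> ~~ e u v) ->
  (forall z, z \in Nlayer e x y 3 ->
     #|[set w in Nlayer e x y 2 | e z w]| = 1) ->
  5 <= #|Nlayer e x y 2| ->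
  Nlayer e x y 6 = set0.
Proof.
move=> [e_sym e_irr] S115_free K4_free diamond_free butterfly_free exy _ _ _.
move=> N2_indep N3_one_parent N2_big.
apply/setP => z6; rewrite in_set0; apply/negP => H6.
have [z5 H5 ez56] := Nlayer_parent H6.
have [z4 H4 ez45] := Nlayer_parent H5.
have [z3 H3 ez34] := Nlayer_parent H4.
have [z2 H2 ez23] := Nlayer_parent H3.
have [u Hu euz2] := Nlayer_parent H2.
have [a /Nlayer0P a_xy eau] := Nlayer_parent Hu.
have z3_unique v : v \in Nlayer e x y 2 -> e z3 v -> v = z2.
  move=> Hv ez3v; move/eq_leq/card_le1_eqP: (N3_one_parent z3 H3); apply.
    by rewrite inE H2 e_sym.
  by rewrite inE Hv.
suff : #|Nlayer e x y 2| <= 4 by rewrite leqNgt N2_big.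
rewrite e_sym in eau; case: a_xy eau => -> eua.
  by apply: (card_N2_le4 _ _ _ _ _ _ exy N2_indep z3_unique Hu H2 H3 H4 H5 H6).
rewrite -!(Nlayer_sym e x y) in N2_indep z3_unique Hu H2 H3 H4 H5 H6 *.
by apply: (card_N2_le4 _ _ _ _ _ _ _ N2_indep z3_unique Hu H2 H3 H4 H5 H6); rewrite // e_sym.
Qed.
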